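(* The dynamic quantum B+ tree storing $N$ key-record pairs with branching factor $B$ answers a dynamic quantum range query $QUERY(x,y)$ in $O(\log_B^2 N)$ expected time.
   Context: Dynamic quantum range query: for the current dataset $D$ (which supports insertions and deletions) and integers $x\le y$, output $\frac{1}{\sqrt{k}}\sum_{i=0}^{k-1}\lvert key_{l_i}\rangle\lvert rec_{l_i}\rangle$ over the $k$ pairs of $D$ with key in $[x,y]$. Model: QRAM store/load operations (including loading a superposition of addresses), quantum oracles, Hadamard gates, measurements and classical node accesses each cost $O(1)$. Structure: the dynamic quantum B+ tree consists of forests $F_0,\dots,F_{L-1}$, $L=\lfloor\log_BN\rfloor+1$, with $F_i$ holding at most $B-1$ quantum B+ trees of height $i$; each quantum B+ tree is a weight-balanced B+ tree (branching factor $B$ a power of 2, $B\ge4$; slots may be $dummy$; routing keys; leaves at equal level; non-root nodes of height $h$ have between $\frac14B^{h+1}$ and $B^{h+1}$ non-dummy pairs beneath; root has at least two non-dummy children) mirrored in QRAMs $\mathcal{Q}_0$ (child IDs at address $iB+j$) and $\mathcal{Q}_1$ (routing keys or key-record pairs at address $iB+j$). Query algorithm: for every tree root in every forest, run the global classical search (starting from the root, classify nodes as outside/inside/partial w.r.t. $[x,y]$; return the current list as soon as it contains a precise partial node, i.e. a leaf or a node with an inside child; otherwise replace each node by its non-outside children), collecting candidate nodes $u_0,\dots,u_{m-1}$. Then prepare $\sum_{i}\sqrt{B^{h(u_i)+1}/\sum_j B^{h(u_j)+1}}\,\lvert u_i\rangle$ ($h$ = height), descend to the key-record slots by repeatedly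 applying Hadamard gates on $\log_2B$ fresh qubits and $\mathcal{Q}_0$, then $\mathcal{Q}_1$, and post-select on the key lying in $[x,y]$, repeating until success. *)

From Stdlib Require Export Permutation.
From mathcomp Require Export all_boot all_order all_algebra.
Set Implicit Arguments. Unset Strict Implicit. Unset Printing Implicit Defensive.
Import Order.TTheory GRing.Theory Num.Theory.

(* A node of a quantum B+ tree: a list of slots, [None] = dummy.
   Leaf slots hold key-record pairs; internal slots hold
   (routing key, child).  The routing key of slot j is the lower bound of
   the key range of child j; child j covers [r_j, r_{j'}) where j' is the
   next non-dummy slot (or the parent's upper bound for the last child). *)
Inductive qbt (R : Type) : Type :=
| QLeaf of seq (option (int * R))
| QNode of seq (option (int * qbt R)).

(* bounds: [None] = -oo as lower bound, +oo as upper bound; ranges are [lo,hi) *)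
Definition lo_le (lo : option int) (k : int) : bool :=
  if lo is Some l then (l <= k)%R else true.
Definition lt_hi (k : int) (hi : option int) : bool :=
  if hi is Some h then (k < h)%R else true.
Definition in_rng (lo hi : option int) (k : int) : bool := lo_le lo k && lt_hi k hi.

Definition in_query {R : Type} (x y : int) (p : int * R) : bool :=
  (x <= p.1)%R && (p.1 <= y)%R.

Fixpoint tpairs {R : Type} (t : qbt R) : seq (int * R) :=
  match t with
  | QLeaf s => pmap id s
  | QNode s =>
    (fix go (s : seq (option (int * qbt R))) : seq (int * R) :=
       match s with
       | [::] => [::]
       | None :: s' => go s'
       | Some (_, c) :: s' => tpairs c ++ go s'
       end) s
  end.

Fixpoint theight {R : Type} (t : qbt R) : nat :=
  match t with
  | QLeaf _ => 0
  | QNode s =>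
    (fix go (s : seq (option (int * qbt R))) : nat :=
       match s with
       | [::] => 0
       | None :: s' => go s'
       | Some (_, c) :: s' => maxn (theight c).+1 (go s')
       end) s
  end.

Definition rkeys {T : Type} (s : seq (option (int * T))) : seq int :=
  [seq p.1 | p <- pmap id s].

Definition next_key {T : Type} (hi : option int) (s : seq (option (int * T))) :=
  if rkeys s is r :: _ then Some r else hi.

Fixpoint child_ranges {R : Type} (hi : option int) (s : seq (option (int * qbt R)))
  : seq (qbt R * option int * option int) :=
  match s with
  | [::] => [::]
  | None :: s' => child_ranges hi s'
  | Some (r, c) :: s' => (c, Some r, next_key hi s') :: child_ranges hi s'
  end.

Fixpoint wf_sub {R : Type} (B h : nat) (lo hi : option int) (t : qbt R) {struct t} : bool :=
  [&& (B ^ h.+1 <= 4 * size (tpairs t))%N, (size (tpairs t) <= B ^ h.+1)%N &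
  match t with
  | QLeaf s => [&& h == 0, size s == B &
                  all (fun o => if o is Some p then in_rng lo hi p.1 else true) s]
  | QNode s =>
    [&& (0 < h)%N, size s == B, sorted (fun a b : int => (a < b)%R) (rkeys s),
        all (in_rng lo hi) (rkeys s) &
    (fix go (s : seq (option (int * qbt R))) : bool :=
       match s with
       | [::] => true
       | None :: s' => go s'
       | Some (r, c) :: s' => wf_sub B h.-1 (Some r) (next_key hi s') c && go s'
       end) s]
  end].

Definition wf_root {R : Type} (B h : nat) (t : qbt R) : bool :=
  match t with
  | QLeaf s => (h == 0) && (size s == B)
  | QNode s =>
    [&& (0 < h)%N, size s == B, (2 <= size (pmap id s))%N,
        sorted (fun a b : int => (a < b)%R) (rkeys s) &
        all (fun e => wf_sub B h.-1 e.1.2 e.2 e.1.1) (child_ranges None s)]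
  end.

(* forests F_0 .. F_{L-1}; F_i is a list of trees of height i *)
Definition dataset {R : Type} (F : seq (seq (qbt R))) : seq (int * R) :=
  flatten [seq flatten (map tpairs f) | f <- F].

Definition dqbt_wf {R : Type} (B N : nat) (F : seq (seq (qbt R))) : bool :=
  [&& size F == (trunc_log B N).+1, size (dataset F) == N &
      all (fun i => (size (nth [::] F i) <= B.-1)%N && all (wf_root B i) (nth [::] F i))
          (iota 0 (size F))].

Definition elt (R : Type) := (qbt R * option int * option int)%type.

Definition outside (x y : int) (lo hi : option int) : bool :=
  (if hi is Some h then (h <= x)%R else false) || (if lo is Some l then (y < l)%R else false).
Definition inside (x y : int) (lo hi : option int) : bool :=
  (if lo is Some l then (x <= l)%R else false) && (if hi is Some h then (h <= y + 1)%R else false).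

Definition children {R : Type} (x y : int) (e : elt R) : seq (elt R) :=
  match e.1.1 with
  | QLeaf _ => [::]
  | QNode s => [seq c <- child_ranges e.2 s | ~~ outside x y c.1.2 c.2]
  end.

Definition precise {R : Type} (x y : int) (e : elt R) : bool :=
  match e.1.1 with
  | QLeaf _ => true
  | QNode s => has (fun c => inside x y c.1.2 c.2) (child_ranges e.2 s)
  end.

(* returns (final list, number of classical node accesses) *)
Fixpoint gsearch {R : Type} (x y : int) (fuel : nat) (L : seq (elt R)) : seq (elt R) * nat :=
  if has (precise x y) L then (L, size L) else
  match fuel with
  | 0 => (L, size L)
  | n.+1 => let r := gsearch x y n (flatten (map (children x y) L)) in (r.1, size L + r.2)
  end.

Definition searches {R : Type} (x y : int) (F : seq (seq (qbt R))) : seq (seq (elt R) * nat) :=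
  flatten [seq [seq gsearch x y i [:: (t, None, None)] | t <- nth [::] F i]
          | i <- iota 0 (size F)].

Definition candidates {R : Type} x y (F : seq (seq (qbt R))) : seq (elt R) :=
  flatten (map fst (searches x y F)).

Definition search_cost {R : Type} x y (F : seq (seq (qbt R))) : nat :=
  sumn (map snd (searches x y F)).

Definition answer {R : Type} x y (F : seq (seq (qbt R))) : seq (int * R) :=
  flatten [seq filter (in_query x y) (tpairs c.1.1) | c <- candidates x y F].

(* normalisation of the prepared state: sum_i B^(h(u_i)+1) *)
Definition prep_weight {R : Type} (B : nat) x y (F : seq (seq (qbt R))) : nat :=
  sumn [seq B ^ (theight c.1.1).+1 | c <- candidates x y F].

(* cost of one trial: state preparation over the m candidates, then for each
   of the (hmax+1) levels log2 B Hadamard gates and one QRAM load, then the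
   measurement/post-selection *)
Definition trial_cost {R : Type} (B : nat) x y (F : seq (seq (qbt R))) : nat :=
  size (candidates x y F)
  + (\max_(c <- candidates x y F) theight c.1.1).+1 * (trunc_log 2 B + 1) + 1.

(* success probability of one trial = size (answer) / prep_weight; the number
   of trials is geometric, with expectation prep_weight / size (answer). *)
Definition expected_time {R : Type} (B : nat) x y (F : seq (seq (qbt R))) : rat :=
  ((search_cost x y F)%:R
   + (trial_cost B x y F)%:R * (prep_weight B x y F)%:R / (size (answer x y F))%:R)%R.

From mathcomp Require Import all_boot all_order all_algebra zify.
Import Order.TTheory GRing.Theory Num.Theory.
Set Implicit Arguments. Unset Strict Implicit. Unset Printing Implicit Defensive.

(* Below a root, the global search keeps only partial nodes, whose range is
   neither inside nor outside [x, y]. Such a range contains x or y, and the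
   ranges on one level are disjoint, so each round of the search touches at
   most two nodes: a tree of height h costs O(h) node accesses, and the at most
   B - 1 trees of each of the L = O(log_B N) forests cost O(L^2) in total.
   The search stops at precise nodes: leaves, of weight B, or nodes of height h
   with an inside child, which alone holds at least B^h / 4 answers by weight
   balance. Hence the normalisation sum_i B^(h(u_i)+1) is O(L + k) for k
   answers, so O(L) trials are expected, each costing O(L). *)

Lemma all_flatten T (a : pred T) (ss : seq (seq T)) : all a (flatten ss) = all (all a) ss.
Proof. by elim: ss => //= s ss IH; rewrite all_cat IH. Qed.

Lemma filter_nil_all_predC T (a : pred T) s : all (predC a) s -> filter a s = [::].
Proof. by elim: s => //= z s IH /andP[/negbTE -> /IH]. Qed.

Lemma lo_le_trans lo (r k : int) : lo_le lo r -> (r <= k)%R -> lo_le lo k.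
Proof. by case: lo => //= l; apply: le_trans. Qed.

Lemma lt_hi_trans hi (r k : int) : (k < r)%R -> lt_hi r hi -> lt_hi k hi.
Proof. by case: hi => //= h; apply: lt_trans. Qed.

Lemma inside_in_rng (x y : int) lo hi k :
  inside x y lo hi -> in_rng lo hi k -> (x <= k <= y)%R.
Proof.
by rewrite /inside /in_rng; case: lo hi => [l|] [h|] //= /andP[? ?] /andP[? ?]; lia.
Qed.

Lemma outside_in_rng (x y : int) lo hi k :
  outside x y lo hi -> in_rng lo hi k -> ~~ (x <= k <= y)%R.
Proof.
move=> Hout Hk; apply/negP => /andP[? ?]; move: Hout Hk; rewrite /outside /in_rng.
by case: lo hi => [l|] [h|] /=; rewrite ?andbT ?orbF ?orFb ?andTb; lia.
Qed.

Section Tree.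

Variable R : Type.

Definition covers k (e : elt R) := in_rng e.1.2 e.2 k.

Definition partial x y (e : elt R) := ~~ outside x y e.1.2 e.2 && ~~ inside x y e.1.2 e.2.

Lemma partial_covers x y (e : elt R) : partial x y e -> covers x e || covers y e.
Proof.
rewrite /partial /covers /in_rng; case: e => [[t [l|]] [h|]] /=;
  rewrite ?negb_or ?negb_and -?ltNge -?leNgt; lia.
Qed.

Lemma tpairs_node hi (s : seq (option (int * qbt R))) :
  tpairs (QNode s) = flatten [seq tpairs c.1.1 | c <- child_ranges hi s].
Proof. by elim: s => [|[[r c]|] s IH] //=; rewrite -IH. Qed.

Lemma theight_node_le hi (s : seq (option (int * qbt R))) h :
  all (fun c => theight c.1.1 < h) (child_ranges hi s) -> theight (QNode s) <= h.
Proof.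
by elim: s => [|[[r c]|] s IH] //= /andP[Hc /IH]; rewrite geq_max Hc.
Qed.

Lemma child_ranges_sub lo hi (s : seq (option (int * qbt R))) k :
  all (in_rng lo hi) (rkeys s) ->
  all (fun c => in_rng c.1.2 c.2 k ==> in_rng lo hi k) (child_ranges hi s).
Proof.
elim: s => [|[[r c]|] s IH] //=.
rewrite /rkeys /= -/(rkeys s) => /andP[/andP[Hlo Hhi] Hs]; rewrite IH // andbT /next_key.
apply/implyP => /andP /= [Hrk Hk]; rewrite /in_rng (lo_le_trans Hlo Hrk) /=.
case: (rkeys s) Hs Hk => [|r' rs] //= /andP[/andP[_ Hr'] _] Hk.
exact: lt_hi_trans Hk Hr'.
Qed.

(* Sorted routing keys make the child ranges pairwise disjoint, and their
   union is [r_0, hi). *)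
Lemma count_covers_child_ranges hi (s : seq (option (int * qbt R))) k :
  sorted (fun a b : int => (a < b)%R) (rkeys s) -> all (fun r => lt_hi r hi) (rkeys s) ->
  count (covers k) (child_ranges hi s)
    <= (if rkeys s is r :: _ then (r <= k)%R && lt_hi k hi else false).
Proof.
elim: s => [|[[r c]|] s IH] //.
rewrite /rkeys /= -/(rkeys s) => Hs /andP[Hr Ha].
have := IH (path_sorted Hs) Ha; rewrite /covers /= /in_rng /= /next_key.
case: (rkeys s) Hs Ha => [|r' rs] Hs Ha /= IHs.
  by case: (r <= k)%R; case: (lt_hi k hi) => /=; lia.
have Hrr' : (r < r')%R by case/andP: Hs.
have Hr'h : lt_hi r' hi by case/andP: Ha.
case: (lerP r' k) IHs => Hk IHs.
- by rewrite andbF add0n (le_trans (ltW Hrr') Hk).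
- by move: IHs; rewrite (lt_hi_trans Hk Hr'h) andbT leqn0 => /eqP ->; rewrite addn0.
Qed.

Variable B : nat.

Lemma wf_sub_node h lo hi (s : seq (option (int * qbt R))) :
  wf_sub B h lo hi (QNode s) ->
  [/\ B ^ h.+1 <= 4 * size (tpairs (QNode s)), 0 < h,
      sorted (fun a b : int => (a < b)%R) (rkeys s), all (in_rng lo hi) (rkeys s) &
      all (fun c => wf_sub B h.-1 c.1.2 c.2 c.1.1) (child_ranges hi s)].
Proof.
move=> /= /and3P[Hsz _ /and5P[Hh _ Hsort Hkeys Hsub]]; split => //.
by elim: s Hsub {Hsz Hsort Hkeys} => [|[[r c]|] s IH] //= /andP[-> /IH].
Qed.

Lemma wf_sub_leaf h lo hi (s : seq (option (int * R))) :
  wf_sub B h lo hi (QLeaf s) -> h = 0 /\ all (fun p => in_rng lo hi p.1) (tpairs (QLeaf s)).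
Proof.
move=> /= /and3P[_ _ /and3P[/eqP -> _ Hs]]; split => //.
by elim: s Hs => [|[p|] s IH] //= /andP[-> /IH].
Qed.

Lemma wf_sub_size h lo hi (t : qbt R) : wf_sub B h lo hi t -> B ^ h.+1 <= 4 * size (tpairs t).
Proof. by case: t => s /and3P[]. Qed.

Lemma wf_sub_theight h lo hi (t : qbt R) : wf_sub B h lo hi t -> theight t <= h.
Proof.
elim: h lo hi t => [|h IH] lo hi [s|s] //; first by case/wf_sub_node.
case/wf_sub_node => _ _ _ _ Hsub; apply: (theight_node_le (hi := hi)).
by apply: sub_all Hsub => c /IH; rewrite ltnS.
Qed.

Lemma wf_sub_in_rng h lo hi (t : qbt R) :
  wf_sub B h lo hi t -> all (fun p => in_rng lo hi p.1) (tpairs t).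
Proof.
elim: h lo hi t => [|h IH] lo hi [s|s]; try by case/wf_sub_leaf.
  by case/wf_sub_node.
case/wf_sub_node => _ _ _ /child_ranges_sub Hsub Hwf; rewrite (tpairs_node hi).
elim: (child_ranges hi s) Hwf Hsub => [|c cs IHc] //= /andP[/IH Hc Hcs] Hsub.
rewrite all_cat IHc ?andbT //; last by move=> k; case/andP: (Hsub k).
by apply: sub_all Hc => p Hp; case/andP: (Hsub p.1) => /implyP Himp _; apply: Himp.
Qed.

Definition wf_elt h (e : elt R) : bool :=
  wf_sub B h e.1.2 e.2 e.1.1 || [&& e.1.2 == None, e.2 == None & wf_root B h e.1.1].

Lemma wf_elt_root h (t : qbt R) : wf_root B h t -> wf_elt h (t, None, None).
Proof. by move=> Ht; rewrite /wf_elt /= Ht orbT. Qed.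

Lemma wf_elt_node h (e : elt R) s : wf_elt h e -> e.1.1 = QNode s ->
  [/\ 0 < h, sorted (fun a b : int => (a < b)%R) (rkeys s),
      all (in_rng e.1.2 e.2) (rkeys s) &
      all (fun c => wf_sub B h.-1 c.1.2 c.2 c.1.1) (child_ranges e.2 s)].
Proof.
case: e => [[t lo] hi] /= + Et; rewrite Et /wf_elt /= => /orP[/wf_sub_node[] //|].
by case/and3P => /eqP -> /eqP -> /and5P[]; split => //; apply/allP.
Qed.

Lemma wf_elt_leaf h (e : elt R) s : wf_elt h e -> e.1.1 = QLeaf s -> h = 0.
Proof.
case: e => [[t lo] hi] /= + Et; rewrite Et /wf_elt /= => /orP[/wf_sub_leaf[] //|].
by case/and3P => _ _ /andP[/eqP].
Qed.

Lemma wf_elt_theight h (e : elt R) : wf_elt h e -> theight e.1.1 <= h.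
Proof.
move=> He; case E: e.1.1 => [s|s] //.
case: (wf_elt_node He E) => Hh _ _ Hsub; apply: (theight_node_le (hi := e.2)).
apply: sub_all Hsub => c /wf_sub_theight Hc.
by rewrite (leq_ltn_trans Hc) // ltn_predL.
Qed.

End Tree.

Section Search.

Variables (R : Type) (B : nat) (x y : int).

Definition answers (L : seq (elt R)) : seq (int * R) :=
  flatten [seq filter (in_query x y) (tpairs e.1.1) | e <- L].

Definition weight (L : seq (elt R)) : nat := sumn [seq B ^ (theight e.1.1).+1 | e <- L].

Definition next_level (L : seq (elt R)) : seq (elt R) := flatten (map (children x y) L).

Lemma answers_cat (L1 L2 : seq (elt R)) : answers (L1 ++ L2) = answers L1 ++ answers L2.
Proof. by rewrite /answers map_cat flatten_cat. Qed.

Lemma size_answers_cons (e : elt R) L :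
  size (answers (e :: L)) = count (in_query x y) (tpairs e.1.1) + size (answers L).
Proof. by rewrite /answers /= size_cat size_filter. Qed.

Lemma weight_cat (L1 L2 : seq (elt R)) : weight (L1 ++ L2) = weight L1 + weight L2.
Proof. by rewrite /weight map_cat sumn_cat. Qed.

Lemma weight_le n (L : seq (elt R)) :
  0 < B -> all (fun e => theight e.1.1 <= n) L -> weight L <= size L * B ^ n.+1.
Proof.
move=> HB; elim: L => //= e L IH /andP[He /IH HL]; rewrite mulSn leq_add //.
by rewrite leq_pexp2l // ltnS.
Qed.

Lemma children_wf_elt h (e : elt R) : wf_elt B h e -> all (wf_elt B h.-1) (children x y e).
Proof.
move=> He; rewrite /children; case E: e.1.1 => [s|s] //.
case: (wf_elt_node He E) => _ _ _ Hsub; rewrite all_filter.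
by apply: sub_all Hsub => c Hc; apply/implyP => _; rewrite /wf_elt Hc.
Qed.

Lemma children_partial (e : elt R) : ~~ precise x y e -> all (partial x y) (children x y e).
Proof.
rewrite /precise /children; case: e.1.1 => [s|s] //; rewrite -all_predC => Hn.
by rewrite all_filter; apply: sub_all Hn => c Hc; apply/implyP => Hout; rewrite /partial Hout.
Qed.

Lemma count_covers_children h k (e : elt R) :
  wf_elt B h e -> count (covers k) (children x y e) <= covers k e.
Proof.
move=> He; rewrite /children; case E: e.1.1 => [s|s] //.
case: (wf_elt_node He E) => _ Hsort Hkeys _.
rewrite count_filter; apply: leq_trans (sub_count (a2 := covers k) _ _) _.
  by move=> c /andP[].
have Hlt : all (fun r => lt_hi r e.2) (rkeys s) by apply: sub_all Hkeys => r /andP[].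
apply: leq_trans (count_covers_child_ranges k Hsort Hlt) _.
case: (rkeys s) Hkeys => [|r rs] //= /andP[/andP[Hl _] _].
case/boolP: ((r <= k)%R && lt_hi k e.2) => //= /andP[Hrk Hk].
by rewrite /covers /in_rng (lo_le_trans Hl Hrk) Hk.
Qed.

(* Children discarded by the search are outside [x, y], so they hold no answer. *)
Lemma answers_children h (e : elt R) : wf_elt B h e -> ~~ precise x y e ->
  filter (in_query x y) (tpairs e.1.1) = answers (children x y e).
Proof.
move=> He; rewrite /precise /children /answers; case E: e.1.1 => [s|s] //.
case: (wf_elt_node He E) => _ _ _ Hsub _; rewrite (tpairs_node e.2).
elim: (child_ranges e.2 s) Hsub => [|c cs IH] //= /andP[Hc /IH {}IH].
rewrite filter_cat IH; case: ifP => //= /negbFE Hout.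
rewrite filter_nil_all_predC //; apply: sub_all (wf_sub_in_rng Hc) => p.
exact: outside_in_rng Hout.
Qed.

Lemma inside_child_count m (cs : seq (elt R)) :
  all (fun c => wf_sub B m c.1.2 c.2 c.1.1) cs -> has (fun c => inside x y c.1.2 c.2) cs ->
  B ^ m.+1 <= 4 * count (in_query x y) (flatten [seq tpairs c.1.1 | c <- cs]).
Proof.
elim: cs => [|c cs IH] //= /andP[Hc Hcs] /orP[Hin|Hhas]; rewrite count_cat mulnDr.
- apply: leq_trans (leq_addr _ _); apply: leq_trans (wf_sub_size Hc) _.
  suff -> : count (in_query x y) (tpairs c.1.1) = size (tpairs c.1.1) by [].
  apply/eqP; rewrite -all_count; apply: sub_all (wf_sub_in_rng Hc) => p.
  exact: inside_in_rng Hin.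
- by apply: leq_trans (leq_addl _ _); apply: IH.
Qed.

(* An inside child of height h-1 alone holds B^h/4 answers, by weight balance. *)
Lemma precise_count h (e : elt R) : wf_elt B h e -> precise x y e ->
  h = 0 \/ B ^ h.+1 <= 4 * B * count (in_query x y) (tpairs e.1.1).
Proof.
move=> He; rewrite /precise; case E: e.1.1 => [s|s] Hp; first by left; apply: wf_elt_leaf He E.
right; case: (wf_elt_node He E) => Hh _ _ Hsub.
have := inside_child_count Hsub Hp; rewrite prednK // -(tpairs_node e.2) => Hcount.
by rewrite expnS -mulnA mulnCA leq_mul2l Hcount orbT.
Qed.

Lemma all_wf_elt_theight h (L : seq (elt R)) :
  all (wf_elt B h) L -> all (fun e => theight e.1.1 <= h) L.
Proof. by apply: sub_all => e /wf_elt_theight. Qed.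

Lemma next_level_wf_elt h (L : seq (elt R)) :
  all (wf_elt B h) L -> all (wf_elt B h.-1) (next_level L).
Proof.
by elim: L => //= e L IH /andP[He /IH HL]; rewrite all_cat children_wf_elt.
Qed.

Lemma next_level_partial (L : seq (elt R)) :
  ~~ has (precise x y) L -> all (partial x y) (next_level L).
Proof.
by elim: L => //= e L IH; rewrite negb_or => /andP[He /IH HL]; rewrite all_cat children_partial.
Qed.

Lemma count_covers_next_level h k (L : seq (elt R)) :
  all (wf_elt B h) L -> count (covers k) (next_level L) <= count (covers k) L.
Proof.
elim: L => //= e L IH /andP[He /IH HL]; rewrite count_cat.
exact: leq_add (count_covers_children k He) HL.
Qed.

Lemma answers_next_level h (L : seq (elt R)) : all (wf_elt B h) L -> ~~ has (precise x y) L ->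
  answers (next_level L) = answers L.
Proof.
elim: L => //= e L IH /andP[He HL]; rewrite negb_or => /andP[Hp Hn].
by rewrite answers_cat IH // -(answers_children He Hp).
Qed.

(* A partial element covers x or y, and each key is covered at most once. *)
Lemma size_partial (L : seq (elt R)) : all (partial x y) L ->
  (forall k, count (covers k) L <= 1) -> size L <= 2.
Proof.
move=> Hp Hc; have := count_predUI (covers x) (covers y) L.
have -> : count (predU (covers x) (covers y)) L = size L.
  by apply/eqP; rewrite -all_count; apply: sub_all Hp => e /partial_covers.
by have := Hc x; have := Hc y; lia.
Qed.

Lemma answers_gsearch n h (L : seq (elt R)) :
  all (wf_elt B h) L -> answers (gsearch x y n L).1 = answers L.
Proof.
elim: n h L => [|n IH] h L HL /=; case: ifP => Hp //=.
by rewrite (IH h.-1) ?next_level_wf_elt // (answers_next_level HL (negbT Hp)).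
Qed.

Lemma has_precise_count n (L : seq (elt R)) : all (wf_elt B n) L -> has (precise x y) L ->
  n = 0 \/ B ^ n.+1 <= 4 * B * size (answers L).
Proof.
elim: L => //= e L IH /andP[He HL] /orP[Hp|Hh].
- case: (precise_count He Hp) => [->|H]; [by left | right].
  by rewrite size_answers_cons; apply: leq_trans H _; rewrite leq_mul2l leq_addr orbT.
- case: (IH HL Hh) => [->|H]; [by left | right].
  by rewrite size_answers_cons; apply: leq_trans H _; rewrite leq_mul2l leq_addl orbT.
Qed.

Lemma gsearch_bounds n (L : seq (elt R)) : 0 < B -> all (wf_elt B n) L -> all (partial x y) L ->
  (forall k, count (covers k) L <= 1) ->
  [/\ (gsearch x y n L).2 <= 2 * n.+1, size (gsearch x y n L).1 <= 2,
      all (fun e => theight e.1.1 <= n) (gsearch x y n L).1 &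
      weight (gsearch x y n L).1 <= 2 * B + 8 * B * size (answers (gsearch x y n L).1)].
Proof.
move=> HB; elim: n L => [|n IH] L HL Hp Hc /=;
  have Hsize := size_partial Hp Hc; have Hw := weight_le HB (all_wf_elt_theight HL).
- have Hw1 : weight L <= 2 * B by apply: leq_trans Hw _; rewrite expn1 leq_mul2r Hsize orbT.
  by case: ifP => _ /=; split; rewrite ?all_wf_elt_theight //; lia.
- rewrite -/(next_level L); case: ifP => Hpr /=.
  + split; rewrite ?all_wf_elt_theight //; first lia.
    case: (has_precise_count HL Hpr) => // Hcount.
    by apply: leq_trans Hw _; have := leq_mul Hsize Hcount; nia.
  + have [Hcost Hsz Hht Hwt] := IH (next_level L) (next_level_wf_elt HL)
      (next_level_partial (negbT Hpr)) (fun k => leq_trans (count_covers_next_level k HL) (Hc k)).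
    split => //; first lia.
    by apply: sub_all Hht => e /= /leqW.
Qed.

Definition search_bounds Lm (r : seq (elt R) * nat) : bool :=
  [&& r.2 <= 2 * Lm, size r.1 <= 2, all (fun e => theight e.1.1 < Lm) r.1 &
      weight r.1 <= 2 * B + 8 * B * size (answers r.1)].

Lemma gsearch_root_bounds i Lm (t : qbt R) : 0 < B -> i < Lm -> wf_root B i t ->
  search_bounds Lm (gsearch x y i [:: (t, None, None)]).
Proof.
move=> HB Hi Ht.
have [||//|Hcost Hsize Hht Hw] := @gsearch_bounds i [:: (t, None, None)] HB.
- by rewrite /= wf_elt_root.
- by [].
apply/and4P; split => //; first lia.
by apply: sub_all Hht => e He; apply: leq_ltn_trans He Hi.
Qed.

Lemma answers_gsearch_root i (t : qbt R) : wf_root B i t ->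
  answers (gsearch x y i [:: (t, None, None)]).1 = filter (in_query x y) (tpairs t).
Proof.
by move=> Ht; rewrite (@answers_gsearch i i) /= ?wf_elt_root // /answers /= cats0.
Qed.

Lemma search_bounds_flatten Lm (S : seq (seq (elt R) * nat)) : all (search_bounds Lm) S ->
  [/\ sumn (map snd S) <= size S * (2 * Lm),
      size (flatten (map fst S)) <= size S * 2,
      all (fun e => theight e.1.1 < Lm) (flatten (map fst S)) &
      weight (flatten (map fst S))
        <= size S * (2 * B) + 8 * B * size (answers (flatten (map fst S)))].
Proof.
elim: S => [|r S IH] //= /andP[/and4P[H1 H2 H3 H4] /IH [I1 I2 I3 I4]].
by rewrite size_cat all_cat H3 I3 weight_cat answers_cat size_cat; split => //; nia.
Qed.

End Search.

Section Forest.

Variables (R : Type) (B : nat) (F : seq (seq (qbt R))) (x y : int).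
Hypothesis B_gt0 : 0 < B.
Hypothesis wf_forests :
  all (fun i => (size (nth [::] F i) <= B.-1) && all (wf_root B i) (nth [::] F i))
      (iota 0 (size F)).

Lemma answer_filter_dataset : answer x y F = filter (in_query x y) (dataset F).
Proof.
rewrite /answer -/(answers x y _) /candidates /searches /dataset.
rewrite -[in RHS](mkseq_nth [::] F) /mkseq -map_comp.
elim: (iota 0 (size F)) wf_forests => [|i ix IH] //= /andP[/andP[_ Hi] /IH {}IH].
rewrite map_cat flatten_cat answers_cat filter_cat IH; congr (_ ++ _).
elim: (nth [::] F i) Hi => [|t ts IHt] //= /andP[Ht /IHt {}IHt].
by rewrite answers_cat (answers_gsearch_root x y Ht) filter_cat IHt.
Qed.

Lemma size_searches : size (searches x y F) <= size F * B.
Proof.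
move: wf_forests; rewrite /searches -[X in _ <= X * B](size_iota 0 (size F)).
elim: (iota 0 (size F)) => [|i ix IH] //= /andP[/andP[Hi _] /IH {}IH].
by rewrite size_cat size_map mulSn leq_add // (leq_trans Hi) ?leq_pred.
Qed.

Lemma candidates_bounds :
  [/\ search_cost x y F <= size F * B * (2 * size F),
      size (candidates x y F) <= size F * B * 2,
      all (fun e => theight e.1.1 < size F) (candidates x y F) &
      prep_weight B x y F <= size F * B * (2 * B) + 8 * B * size (answer x y F)].
Proof.
have Hsearch : all (search_bounds B x y (size F)) (searches x y F).
  rewrite /searches all_flatten all_map; apply/allP => i Hi /=.
  have /andP[_ Htrees] := allP wf_forests i Hi.
  move: Hi; rewrite mem_iota add0n => /andP[_ Hi].
  by rewrite all_map; apply: sub_all Htrees => t Ht /=; apply: gsearch_root_bounds.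
have [Hcost Hsize Hht Hw] := search_bounds_flatten Hsearch.
have HS := size_searches.
split => //.
- by apply: leq_trans Hcost _; rewrite leq_mul2r HS orbT.
- by apply: leq_trans Hsize _; rewrite leq_mul2r HS orbT.
- by apply: leq_trans Hw _; rewrite leq_add2r leq_mul2r HS orbT.
Qed.

Lemma search_cost_le : search_cost x y F <= 2 * B * size F ^ 2.
Proof. by case: candidates_bounds => Hcost _ _ _; nia. Qed.

Lemma trial_cost_le : 0 < size F ->
  trial_cost B x y F <= (2 * B + trunc_log 2 B + 2) * size F.
Proof.
move=> HF; case: candidates_bounds => _ Hsize Hht _.
have Hmax : \max_(c <- candidates x y F) theight c.1.1 < size F.
  elim: (candidates x y F) Hht => [|c cs IH]; rewrite ?big_nil ?big_cons //=.
  by rewrite gtn_max => /andP[-> /IH].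
by rewrite /trial_cost; have := leq_mul Hmax (leqnn (trunc_log 2 B + 1)); nia.
Qed.

Lemma prep_weight_le : 0 < size F -> 0 < size (answer x y F) ->
  prep_weight B x y F <= (2 * B * B + 8 * B) * size F * size (answer x y F).
Proof. by move=> HF HA; case: candidates_bounds => _ _ _ Hw; nia. Qed.

Lemma expected_time_le : 0 < size F -> 0 < size (answer x y F) ->
  (expected_time B x y F
     <= (2 * B + (2 * B + trunc_log 2 B + 2) * (2 * B * B + 8 * B))%:R * (size F)%:R ^+ 2)%R.
Proof.
move=> HF HA; rewrite /expected_time.
have Htrials : ((trial_cost B x y F)%:R * (prep_weight B x y F)%:R / (size (answer x y F))%:R
                <= ((2 * B + trunc_log 2 B + 2) * (2 * B * B + 8 * B) * size F ^ 2)%:R :> rat)%R.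
  rewrite ler_pdivrMr ?ltr0n // -!natrM ler_nat.
  by apply: leq_trans (leq_mul (trial_cost_le HF) (prep_weight_le HF HA)) _; nia.
have Hsearch : ((search_cost x y F)%:R <= (2 * B * size F ^ 2)%:R :> rat)%R.
  by rewrite ler_nat search_cost_le.
apply: le_trans (lerD Hsearch Htrials) _.
by rewrite -natrD -natrX -natrM ler_nat [leqRHS]mulnDl.
Qed.

End Forest.

Theorem theorem5p2 (B : nat) (HB4 : (4 <= B)%N) (HB2 : exists e : nat, B = (2 ^ e)%N) :
  exists C : rat, (0 <= C)%R /\
  forall (Rec : Type) (N : nat) (F : seq (seq (qbt Rec))) (x y : int),
    dqbt_wf B N F -> (x <= y)%R ->
    (0 < count (in_query x y) (dataset F))%N ->
    Permutation (answer x y F) (filter (in_query x y) (dataset F)) /\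
    (expected_time B x y F <= C * ((trunc_log B N).+1)%:R ^+ 2)%R.
Proof.
have HB : 0 < B by lia.
exists ((2 * B + (2 * B + trunc_log 2 B + 2) * (2 * B * B + 8 * B))%:R)%R.
split; first exact: ler0n.
move=> Rec N F x y /and3P[/eqP HF _ Hforests] _ Hcount.
have Hanswer := answer_filter_dataset x y Hforests.
split; first by rewrite Hanswer; apply: Permutation_refl.
rewrite -HF; apply: expected_time_le => //; first by rewrite HF.
by rewrite Hanswer size_filter.
Qed.
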